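(* Let $p\in(0,1]$ and let $q\ge1$ be an integer. Then $\gamma_\infty^*\ge\big(1-(1-p)^q\big)\gamma_{\infty,q}^*$.
   Context: For an integer $q\ge1$, $\gamma_{\infty,q}^*$ is the optimal value (supremum) of $(CLP)_{p,q}$: maximize $\gamma$ over $\gamma\ge0$ and measurable $\alpha:[0,1]\times\{1,2,\dots\}\to[0,1]$ subject to $t\,\alpha(t,s)\le1-p\int_0^t\sum_{\sigma\ge1}\alpha(\tau,\sigma)\,d\tau$ for all $t\in[0,1],s\ge1$, and $\gamma\le\frac{p}{1-(1-p)^k}\int_0^1\sum_{s\ge1}\alpha(t,s)\sum_{\ell=s}^k\binom{\ell-1}{s-1}t^s(1-t)^{\ell-s}\,dt$ for all $k\in[q]$. $\gamma_\infty^*$ is the optimal value of the same program with the second family of constraints imposed for all $k\ge1$. *)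

From HB Require Import structures.
From mathcomp Require Import all_boot all_order all_algebra.
From mathcomp Require Import all_classical all_reals all_analysis.
Set Implicit Arguments. Unset Strict Implicit. Unset Printing Implicit Defensive.
Import Order.TTheory GRing.Theory Num.Theory.
Local Open Scope classical_set_scope.
Local Open Scope ring_scope.

(* alpha t s for t : R, s : nat; only t in [0,1] and s >= 1 are relevant. *)

Definition ker_val {R : realType} (k s : nat) (t : R) : R :=
  \sum_(s <= l < k.+1) ('C(l.-1, s.-1))%:R * t ^+ s * (1 - t) ^+ (l - s).

Definition clp_budget {R : realType} (p : R) (alpha : R -> nat -> R) : Prop :=
  forall t : R, 0 <= t <= 1 -> forall s : nat, (1 <= s)%N ->
    ((t * alpha t s)%:E <=
      1%:E - p%:E * (\int[@lebesgue_measure R]_(tau in `[0%R, t]%classic)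
                      (\sum_(1 <= sigma <oo) (alpha tau sigma)%:E)))%E.

Definition clp_ratio {R : realType} (p : R) (alpha : R -> nat -> R)
    (gamma : R) (k : nat) : Prop :=
  (gamma%:E <= (p / (1 - (1 - p) ^+ k))%:E *
     \int[@lebesgue_measure R]_(t in `[0%R, 1%R]%classic)
        (\sum_(1 <= s < k.+1) alpha t s * ker_val k s t)%:E)%E.

Definition clp_feasible {R : realType} (p : R) (K : set nat)
    (gamma : R) (alpha : R -> nat -> R) : Prop :=
  [/\ 0 <= gamma,
      (forall s : nat, (1 <= s)%N -> measurable_fun (`[0%R, 1%R]%classic : set R) (fun t : R => alpha t s)),
      (forall t : R, 0 <= t <= 1 -> forall s : nat, (1 <= s)%N ->
          0 <= alpha t s <= 1),
      clp_budget p alpha &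
      (forall k : nat, K k -> (1 <= k)%N -> clp_ratio p alpha gamma k)].

Definition clp_value {R : realType} (p : R) (K : set nat) : \bar R :=
  ereal_sup [set gamma%:E | gamma in
               [set g : R | exists alpha, clp_feasible p K g alpha]].

Definition gamma_star_q {R : realType} (p : R) (q : nat) : \bar R :=
  clp_value p [set k : nat | (1 <= k <= q)%N].

Definition gamma_star {R : realType} (p : R) : \bar R :=
  clp_value p [set k : nat | (1 <= k)%N].

(* Scaling a feasible solution (gamma, alpha) of (CLP)_{p,q} by c := 1 - (1-p)^q
   keeps it feasible when all k are imposed.  For k <= q the old constraint
   suffices, as c <= 1.  For k > q write I_k for the integral in the k-th ratio
   constraint: its integrand dominates that of I_q (more summands, and each kernel
   sum gains nonnegative terms), so c gamma <= p I_q <= p I_k <= p I_k / (1-(1-p)^k). *)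
From HB Require Import structures.
From mathcomp Require Import all_boot all_order all_algebra.
From mathcomp Require Import all_classical all_reals all_analysis.
From mathcomp Require Import measurable_realfun.
Set Implicit Arguments. Unset Strict Implicit. Unset Printing Implicit Defensive.
Import Order.TTheory GRing.Theory Num.Theory.
Local Open Scope classical_set_scope.
Local Open Scope ring_scope.

Section Kernel.
Variable R : realType.
Implicit Types (t : R) (k q s : nat).

Lemma ker_val_ge0 k s t : 0 <= t <= 1 -> 0 <= ker_val k s t.
Proof.
move=> /andP[t0 t1]; apply: sumr_ge0 => l _.
by rewrite !mulr_ge0 // exprn_ge0 // subr_ge0.
Qed.

Lemma ker_val_le q k s t : (s <= q.+1)%N -> (q <= k)%N ->
  0 <= t <= 1 -> ker_val q s t <= ker_val k s t.
Proof.
move=> sq qk /andP[t0 t1].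
rewrite /ker_val [leRHS](@big_cat_nat R 0 +%R q.+1) //= lerDl.
by apply: sumr_ge0 => l _; rewrite !mulr_ge0 // exprn_ge0 // subr_ge0.
Qed.

Lemma measurable_ker_val k s (D : set R) : measurable_fun D (ker_val k s).
Proof.
apply: measurable_sum => l; apply: measurable_funM.
  by apply: measurable_funM; [exact: measurable_cst | exact: exprn_measurable].
by apply/measurable_funX/measurable_funB; [exact: measurable_cst | exact: measurable_id].
Qed.

End Kernel.

Section RatioIntegrand.
Variables (R : realType) (alpha : R -> nat -> R).
Hypothesis alpha_ge0 :
  forall t, 0 <= t <= 1 -> forall s, (1 <= s)%N -> 0 <= alpha t s.

Definition ratio_integrand k (t : R) : R :=
  \sum_(1 <= s < k.+1) alpha t s * ker_val k s t.

Lemma ratio_integrand_ge0 k t : 0 <= t <= 1 -> 0 <= ratio_integrand k t.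
Proof.
move=> t01; rewrite /ratio_integrand big_nat_cond.
apply: sumr_ge0 => s /andP[/andP[s1 _] _].
by rewrite mulr_ge0 ?alpha_ge0 ?ker_val_ge0.
Qed.

Lemma ratio_integrand_le q k t : (q <= k)%N -> 0 <= t <= 1 ->
  ratio_integrand q t <= ratio_integrand k t.
Proof.
move=> qk t01; rewrite /ratio_integrand [leRHS](@big_cat_nat R 0 +%R q.+1) //=.
apply: ler_wpDr.
  rewrite big_nat_cond; apply: sumr_ge0 => s /andP[/andP[s1 _] _].
  by rewrite mulr_ge0 ?alpha_ge0 ?ker_val_ge0 // (leq_trans _ s1).
rewrite big_nat_cond [leRHS]big_nat_cond; apply: ler_sum => s /andP[/andP[s1 sq] _].
by rewrite ler_wpM2l ?alpha_ge0 ?ker_val_le // ltnW.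
Qed.

Hypothesis measurable_alpha :
  forall s, (1 <= s)%N -> measurable_fun (`[0%R, 1%R] : set R) (alpha^~ s).

Lemma measurable_ratio_integrand k :
  measurable_fun (`[0%R, 1%R] : set R) (ratio_integrand k).
Proof.
rewrite /ratio_integrand.
(* [1 <= s] is only known through membership in the range, so make it explicit *)
have -> : (fun t => \sum_(1 <= s < k.+1) alpha t s * ker_val k s t) =
    fun t => \sum_(s <- index_iota 1 k.+1)
      ((if (1 <= s)%N then alpha t s else 0) * ker_val k s t).
  apply/funext => t; rewrite big_nat_cond [RHS]big_nat_cond.
  by apply: eq_bigr => s /andP[/andP[-> _] _].
apply: measurable_sum => s; apply: measurable_funM; last exact: measurable_ker_val.
by case: (1 <= s)%N / boolP => [/measurable_alpha|_] //; exact: measurable_cst.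
Qed.

Definition ratio_integral k : \bar R :=
  \int[@lebesgue_measure R]_(t in `[0%R, 1%R]) (ratio_integrand k t)%:E.

Lemma ratio_integral_ge0 k : (0 <= ratio_integral k)%E.
Proof.
by apply: integral_ge0 => t; rewrite /= in_itv /= lee_fin => /ratio_integrand_ge0.
Qed.

Lemma ratio_integral_le q k : (q <= k)%N ->
  (ratio_integral q <= ratio_integral k)%E.
Proof.
move=> qk; apply: ge0_le_integral => //.
- by move=> t; rewrite /= in_itv /= lee_fin => /ratio_integrand_ge0.
- by apply/measurable_EFinP; exact: measurable_ratio_integrand.
- by apply/measurable_EFinP; exact: measurable_ratio_integrand.
- by move=> t; rewrite /= in_itv /= lee_fin => t01; exact: ratio_integrand_le.
Qed.

End RatioIntegrand.

Section Scaling.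
Variables (R : realType) (p : R).
Hypothesis p_gt0 : 0 < p.
Hypothesis p_le1 : p <= 1.

Lemma onem_expr_gt0 k : (1 <= k)%N -> 0 < 1 - (1 - p) ^+ k.
Proof.
move=> k1; rewrite subr_gt0 exprn_ilt1 -?lt0n ?subr_ge0 //.
by rewrite ltrBlDr ltrDl.
Qed.

Lemma onem_expr_le1 k : 1 - (1 - p) ^+ k <= 1.
Proof. by rewrite lerBlDr lerDl exprn_ge0 // subr_ge0. Qed.

Variables (alpha : R -> nat -> R) (gamma : R).
Hypothesis alpha_ge0 :
  forall t, 0 <= t <= 1 -> forall s, (1 <= s)%N -> 0 <= alpha t s.
Hypothesis measurable_alpha :
  forall s, (1 <= s)%N -> measurable_fun (`[0%R, 1%R] : set R) (alpha^~ s).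

Lemma clp_ratio_scale q k : (1 <= q)%N -> (q <= k)%N ->
  clp_ratio p alpha gamma q ->
  clp_ratio p alpha ((1 - (1 - p) ^+ q) * gamma) k.
Proof.
move=> q1 qk ratio_q; have cq_gt0 := onem_expr_gt0 q1.
have k1 : (1 <= k)%N := leq_trans q1 qk.
change (((1 - (1 - p) ^+ q) * gamma)%:E <=
  (p / (1 - (1 - p) ^+ k))%:E * ratio_integral alpha k)%E.
have scaled_q : (((1 - (1 - p) ^+ q) * gamma)%:E <= p%:E * ratio_integral alpha q)%E.
  rewrite EFinM; apply: le_trans (lee_wpmul2l _ ratio_q) _; first by rewrite lee_fin ltW.
  by rewrite muleA -EFinM mulrCA divff ?mulr1 // gt_eqF.
apply: (le_trans scaled_q); apply: le_trans (_ : p%:E * ratio_integral alpha k <= _)%E.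
  by apply: lee_wpmul2l; [rewrite lee_fin ltW | exact: ratio_integral_le].
apply: lee_wpmul2r; first exact: ratio_integral_ge0.
by rewrite lee_fin ler_pdivlMr ?onem_expr_gt0 // ler_piMr ?onem_expr_le1 // ltW.
Qed.

End Scaling.

Lemma clp_feasible_scale (R : realType) (p gamma : R) (alpha : R -> nat -> R) q :
  0 < p <= 1 -> (1 <= q)%N ->
  clp_feasible p [set k | (1 <= k <= q)%N] gamma alpha ->
  clp_feasible p [set k | (1 <= k)%N] ((1 - (1 - p) ^+ q) * gamma) alpha.
Proof.
move=> /andP[p_gt0 p_le1] q1 [gamma_ge0 measurable_alpha alpha01 budget ratio].
have alpha_ge0 t : 0 <= t <= 1 -> forall s, (1 <= s)%N -> 0 <= alpha t s.
  by move=> t01 s s1; case/andP: (alpha01 t t01 s s1).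
split=> // [|k _ k1].
  by rewrite mulr_ge0 // ltW // onem_expr_gt0.
have [kq|qk] := leqP k q.
  apply: le_trans (ratio k _ k1); last by rewrite /= k1.
  by rewrite lee_fin ler_piMl // onem_expr_le1.
apply: clp_ratio_scale => //; first exact: ltnW.
by apply: ratio => //=; rewrite q1 leqnn.
Qed.

Theorem mainTheorem14 (R : realType) (p : R) (q : nat) :
  0 < p <= 1 -> (1 <= q)%N ->
  (((1 - (1 - p) ^+ q)%:E * gamma_star_q p q) <= gamma_star p)%E.
Proof.
move=> p01 q1; have /andP[p_gt0 p_le1] := p01.
rewrite /gamma_star_q /gamma_star /clp_value -ereal_sup_pZl ?onem_expr_gt0 //.
apply: ereal_sup_le => _ [_ [gamma [alpha feasible] <-] <-].
exists ((1 - (1 - p) ^+ q) * gamma); last by rewrite EFinM.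
by exists alpha; exact: clp_feasible_scale.
Qed.
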